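(* Let $k\in\{2,3,4,5,6\}$ and let $n$ be a positive integer. With $\ell:=\lfloor (k+1)^2/4\rfloor$ and $q:=n\bmod \ell$, \[ \nu_k(K_{k+1,n}) \ge q\binom{\frac{n-q}{\ell}+1}{2} + (\ell-q)\binom{\frac{n-q}{\ell}}{2}. \]
   Context: A book with $k$ pages consists of a line (the spine) and $k$ half-planes (the pages) whose common boundary is the spine. A $k$-page drawing of a graph places all vertices on the spine and draws each edge inside a single page (edges may cross). $\nu_k(G)$ is the minimum number of crossings over all $k$-page drawings of $G$. Convention: $\binom{a}{b}=0$ whenever $a<b$. *)

From mathcomp Require Import all_boot all_fingroup.
Set Implicit Arguments. Unset Strict Implicit. Unset Printing Implicit Defensive.

(* Complete bipartite graph K_{m,n}: vertices 'I_m + 'I_n, edges 'I_m * 'I_n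
   (edge (i,j) joins inl i and inr j). *)
Definition bvert (m n : nat) := ('I_m + 'I_n)%type.
Definition bedge (m n : nat) := ('I_m * 'I_n)%type.

(* A k-page drawing (combinatorial form): a linear order of the vertices along
   the spine, given by a permutation of the vertex set (vertex v sits at
   position enum_rank (sigma v)), together with a page for each edge. *)
Definition drawing (k m n : nat) := ({perm bvert m n} * {ffun bedge m n -> 'I_k})%type.

Section Draw.
Variables (k m n : nat).

Definition pos (d : drawing k m n) (v : bvert m n) : nat := enum_rank (d.1 v).

Definition lo (d : drawing k m n) (e : bedge m n) : nat :=
  minn (pos d (inl e.1)) (pos d (inr e.2)).
Definition hi (d : drawing k m n) (e : bedge m n) : nat :=
  maxn (pos d (inl e.1)) (pos d (inr e.2)).

(* e and f (same page) cross iff their endpoints strictly interleave along the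
   spine; the asymmetric condition counts each unordered crossing pair once. *)
Definition crossb (d : drawing k m n) (e f : bedge m n) : bool :=
  (d.2 e == d.2 f) && [&& lo d e < lo d f, lo d f < hi d e & hi d e < hi d f].

Definition crossings (d : drawing k m n) : nat :=
  #|[set ef : bedge m n * bedge m n | crossb d ef.1 ef.2]|.
End Draw.

(* nu_k(K_{m,n}): minimum number of crossings over all k-page drawings
   (the default #|E|^2 is an upper bound on every crossing count and is only
   returned when there is no drawing, i.e. k = 0). *)
Definition nu (k m n : nat) : nat :=
  \big[minn/(m * n) ^ 2]_(d : drawing k m n) crossings d.

(* Every k-page drawing of K_{k+1,n} induces a conflict graph on the n vertices
   of the large class: two of them are adjacent when an edge at one crosses an
   edge at the other.  A finite computation shows that K_{k+1,l+1}, with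
   l = floor((k+1)^2/4), has no crossing-free k-page drawing: up to rotation and
   reflection of the spine, for every arrangement of the k+1 + l+1 vertices the
   graph of crossing chords has no proper k-colouring.  Hence the conflict graph
   has independence number at most l, Turan's theorem gives it at least
   sum_(i < n) floor(i / l) edges, and each edge is witnessed by a crossing. *)

From mathcomp Require Import all_boot all_fingroup zify.
Set Implicit Arguments. Unset Strict Implicit. Unset Printing Implicit Defensive.

Definition turan_sum (n l : nat) : nat := \sum_(i < n) i %/ l.

Lemma turan_sumS n l : turan_sum n.+1 l = turan_sum n l + n %/ l.
Proof. by rewrite /turan_sum big_ord_recr. Qed.

Lemma turan_sum0 l : turan_sum 0 l = 0.
Proof. by rewrite /turan_sum big_ord0. Qed.

Lemma turan_sum1 n : turan_sum n 1 = 'C(n, 2).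
Proof. by rewrite -bin2_sum /turan_sum big_mkord; apply: eq_bigr => i _; rewrite divn1. Qed.

Lemma turan_sum_le_sq n l : turan_sum n l <= n * n.
Proof.
rewrite -{2}(card_ord n) -sum_nat_const.
by apply: leq_sum => i _; exact: leq_trans (leq_div _ _) (ltnW (ltn_ord i)).
Qed.

Lemma bin2S s : 'C(s.+1, 2) = 'C(s, 2) + s.
Proof. by rewrite binS bin1. Qed.

(* The arithmetic step of Turan's induction: deleting a closed neighbourhood of
   [s] vertices lowers the independence number by one. *)
Lemma turan_sum_rec n s l : 0 < l -> s <= n ->
  turan_sum n l.+1 <= 'C(s, 2) + turan_sum (n - s) l.
Proof.
move=> l_gt0; elim: n s => [|n IH] s le_sn.
  by rewrite (_ : s = 0) ?turan_sum0 //; lia.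
rewrite turan_sumS; set Q := n %/ l.+1.
have le_Qn : Q + Q * l <= n by rewrite -mulnS leq_divM.
clearbody Q; have [lt_Qs | le_sQ] := ltnP Q s.
  case: s lt_Qs le_sn => // s lt_Qs le_sn.
  by have := IH s le_sn; rewrite subSS bin2S; lia.
have le_Q_nsl : Q <= (n - s) %/ l by rewrite leq_divRL //; nia.
by have := IH s (ltac:(nia)); rewrite subSn ?turan_sumS; nia.
Qed.

Lemma turan_sum_divn Q q l : q <= l -> turan_sum (Q * l + q) l = l * 'C(Q, 2) + q * Q.
Proof.
elim: Q q => [|Q IHQ] q le_ql.
  rewrite mul0n add0n muln0 addn0 (_ : 'C(0, 2) = 0) // muln0.
  elim: q le_ql => [|q IHq] le_ql; first by rewrite turan_sum0.
  by rewrite turan_sumS IHq ?divn_small; lia.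
elim: q le_ql => [|q IHq] le_ql; first by rewrite addn0 mulSnr IHQ // bin2S; lia.
rewrite addnS turan_sumS IHq 1?ltnW // divnMDl; last lia.
by rewrite divn_small; lia.
Qed.

Lemma turan_sum_closed n l : 0 < l ->
  turan_sum n l = n %% l * 'C(n %/ l + 1, 2) + (l - n %% l) * 'C(n %/ l, 2).
Proof.
move=> l_gt0; have le_ql : n %% l <= l by rewrite ltnW ?ltn_mod.
rewrite {1}(divn_eq n l) turan_sum_divn // addn1 bin2S.
move: (n %% l) le_ql (n %/ l) ('C(n %/ l, 2)) => q le_ql Q c; nia.
Qed.

Section Turan.
Variables (T : finType) (e : rel T).
Hypotheses (e_sym : symmetric e) (e_irr : irreflexive e).

Definition nbhd (V : {set T}) (x : T) : {set T} := [set y in V | e x y].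

Definition indep_le (V : {set T}) (l : nat) : Prop :=
  forall I : {set T}, I \subset V -> {in I &, forall x y, ~~ e x y} -> #|I| <= l.

Lemma indep_le0 V : indep_le V 0 -> V = set0.
Proof.
move=> hV; apply/setP => x; rewrite inE; apply/negbTE/negP => xV.
suff: #|[set x]| <= 0 by rewrite cards1.
by apply: hV; rewrite ?sub1set // => y z /set1P-> /set1P->; rewrite e_irr.
Qed.

Lemma indep_le_closed_nbhd (V : {set T}) v l : v \in V -> indep_le V l.+1 ->
  indep_le (V :\: (v |: nbhd V v)) l.
Proof.
move=> vV hV I sIV indI; have vI : v \notin I.
  by apply/negP => /(subsetP sIV); rewrite !inE eqxx.
have nvI y : y \in I -> ~~ e v y.
  move=> /(subsetP sIV); rewrite !inE negb_or => /andP[/andP[_]].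
  by move=> + yV; rewrite yV.
suff: #|v |: I| <= l.+1 by rewrite cardsU1 vI.
apply: hV.
  by rewrite subUset sub1set vV (subset_trans sIV) ?subsetDl.
move=> x y /setU1P[-> | xI] /setU1P[-> | yI]; rewrite ?e_irr ?nvI //.
  by rewrite e_sym nvI.
exact: indI.
Qed.

Lemma sum_nbhd_split (V N : {set T}) : N \subset V ->
  \sum_(x in V :\: N) #|nbhd (V :\: N) x| + \sum_(x in N) #|nbhd V x| <=
  \sum_(x in V) #|nbhd V x|.
Proof.
move=> sNV; rewrite [X in _ <= X](big_setID N) /= (setIidPr sNV) addnC leq_add2l.
apply: leq_sum => x _; apply: subset_leq_card; apply/subsetP => y.
by rewrite !inE => /andP[/andP[_ yV] ->]; rewrite yV.
Qed.

Lemma nbhd_sub (V : {set T}) x : nbhd V x \subset V.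
Proof. by apply/subsetP => y; rewrite inE => /andP[]. Qed.

Lemma sum_nbhd_card (V : {set T}) :
  \sum_(x in V) #|nbhd V x| = #|[set p : T * T | [&& p.1 \in V, p.2 \in V & e p.1 p.2]]|.
Proof.
rewrite -sum1_card (eq_bigl (fun p : T * T => (p.1 \in V) && ((p.2 \in V) && e p.1 p.2))).
  rewrite -(pair_big_dep (mem V) (fun x y => (y \in V) && e x y) (fun _ _ => 1)) /=.
  by apply: eq_bigr => x _; rewrite -sum1_card; apply: eq_bigl => y; rewrite inE.
by move=> p; rewrite inE.
Qed.

Theorem turan (V : {set T}) l :
  indep_le V l -> 2 * turan_sum #|V| l <= \sum_(x in V) #|nbhd V x|.
Proof.
move: {2}#|V| (leqnn #|V|) => N; elim: N V l => [|N IH] V l le_VN hV.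
  by rewrite (_ : #|V| = 0) ?turan_sum0 //; lia.
have [-> | [v0 v0V]] := set_0Vmem V; first by rewrite cards0 turan_sum0.
have [v vV' min_v] := arg_minnP (fun x => #|nbhd V x|) v0V; have vV : v \in V := vV'.
case: l hV => [/indep_le0 V0 | l hV]; first by rewrite V0 inE in v0V.
set d := #|nbhd V v|; set Nv := v |: nbhd V v.
have vNv : v \notin nbhd V v by rewrite inE e_irr andbF.
have card_Nv : #|Nv| = d.+1 by rewrite cardsU1 vNv.
have sNvV : Nv \subset V by rewrite subUset sub1set vV nbhd_sub.
have card_V' : #|V :\: Nv| = #|V| - d.+1 by rewrite cardsD (setIidPr sNvV) card_Nv.
have le_dV : d.+1 <= #|V| by rewrite -card_Nv subset_leq_card.
have sum_Nv : d.+1 * d <= \sum_(x in Nv) #|nbhd V x|.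
  rewrite -card_Nv -sum_nat_const; apply: leq_sum => x xNv.
  exact: min_v (subsetP sNvV x xNv).
have bin2_d : 2 * 'C(d.+1, 2) = d.+1 * d by rewrite -(mul_bin_diag d.+1 1) bin1.
have split_V := sum_nbhd_split sNvV.
case: l hV => [|l] hV; have := indep_le_closed_nbhd vV hV.
  move=> /indep_le0 V'0; move: card_V'; rewrite V'0 cards0 => card_V'.
  by rewrite (_ : #|V| = d.+1) ?turan_sum1; lia.
have le_V'N : #|V :\: Nv| <= N by rewrite card_V'; lia.
move=> /(IH _ _ le_V'N); rewrite card_V'.
by have := @turan_sum_rec _ _ l.+1 isT le_dV; lia.
Qed.

End Turan.

Definition cross (c c' : nat * nat) : bool :=
  let lo := minn c.1 c.2 in let hi := maxn c.1 c.2 in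
  let lo' := minn c'.1 c'.2 in let hi' := maxn c'.1 c'.2 in
  [&& lo < lo', lo' < hi & hi < hi'] || [&& lo' < lo, lo < hi' & hi' < hi].

Lemma cross_homo (g : nat -> nat) L i j i' j' :
  {in gtn L &, forall x y, (g x < g y) = (x < y)} ->
  [&& i < L, j < L, i' < L & j' < L] ->
  cross (g i, g j) (g i', g j') = cross (i, j) (i', j').
Proof.
move=> g_lt /and4P[hi hj hi' hj'].
have g_min x y : x < L -> y < L -> minn (g x) (g y) = g (minn x y).
  by move=> hx hy; rewrite /minn g_lt ?inE //; case: ifP.
have g_max x y : x < L -> y < L -> maxn (g x) (g y) = g (maxn x y).
  by move=> hx hy; rewrite /maxn g_lt ?inE //; case: ifP.
have lt_min x y : x < L -> minn x y \in gtn L by move=> hx; rewrite inE gtn_min hx.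
have lt_max x y : x < L -> y < L -> maxn x y \in gtn L by move=> hx hy; rewrite inE gtn_max hx hy.
by rewrite /cross /= !g_min // !g_max // !g_lt ?lt_min ?lt_max.
Qed.

Definition letters (b : bool) (w : seq bool) : seq nat :=
  [seq i <- iota 0 (size w) | nth false w i == b].

(* A word lists the two vertex classes along the spine ([true] for the small
   one); its chords are the edges of the complete bipartite graph on it. *)
Definition chords (w : seq bool) : seq (nat * nat) :=
  [seq (i, j) | i <- letters true w, j <- letters false w].

Lemma mem_chords w i j :
  ((i, j) \in chords w) = [&& i < size w, j < size w, nth false w i & ~~ nth false w j].
Proof.
apply/allpairsP/idP => [[[i' j'] /= [+ + [-> ->]]] | /and4P[hi hj wi wj]].
  by rewrite !mem_filter !mem_iota /= => /andP[/eqP-> ->] /andP[/eqP-> ->].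
by exists (i, j); rewrite !mem_filter !mem_iota /= hi hj wi (negbTE wj).
Qed.

Definition forces_crossing (k : nat) (w : seq bool) : Prop :=
  forall p : nat * nat -> nat, (forall c, p c < k) ->
  has (fun c => has (fun c' => cross c c' && (p c == p c')) (chords w)) (chords w).

Lemma forces_crossing_reindex k (w w' : seq bool) (g : nat -> nat) :
  size w' = size w ->
  (forall i, i < size w -> g i < size w /\ nth false w' i = nth false w (g i)) ->
  (forall i j i' j', [&& i < size w, j < size w, i' < size w & j' < size w] ->
     cross (i, j) (i', j') -> cross (g i, g j) (g i', g j')) ->
  forces_crossing k w' -> forces_crossing k w.
Proof.
move=> eq_size hg g_cross hw' p p_lt_k.
have /hasP[[i j] ij_w' /hasP[[i' j'] ij'_w' /andP[x_ij eq_p]]] :=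
  hw' (fun c => p (g c.1, g c.2)) (fun c => p_lt_k _).
move: ij_w' ij'_w'; rewrite !mem_chords eq_size.
move=> /and4P[hi hj wi wj] /and4P[hi' hj' wi' wj'].
have [[gi wgi] [gj wgj]] := (hg _ hi, hg _ hj).
have [[gi' wgi'] [gj' wgj']] := (hg _ hi', hg _ hj').
apply/hasP; exists (g i, g j); first by rewrite mem_chords gi gj -wgi -wgj wi.
apply/hasP; exists (g i', g j'); first by rewrite mem_chords gi' gj' -wgi' -wgj' wi'.
by rewrite g_cross ?hi ?hj ?hi' ?hj'.
Qed.

Lemma nth_rot (T : Type) (x0 : T) r (s : seq T) i : r <= size s -> i < size s ->
  nth x0 (rot r s) i = nth x0 s (if i + r < size s then i + r else i + r - size s).
Proof.
move=> hr hi; rewrite /rot nth_cat size_drop nth_drop.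
case: ifP => hir; first by rewrite ifT 1?addnC //; lia.
by rewrite ifF ?nth_take; try congr nth; lia.
Qed.

Lemma forces_crossing_rot1 k w : forces_crossing k (rot 1 w) -> forces_crossing k w.
Proof.
case: w => [|y w]; first exact.
apply: (forces_crossing_reindex (g := fun i => if i.+1 < size (y :: w) then i.+1 else 0)).
- by rewrite size_rot.
- move=> i hi; rewrite nth_rot // addn1.
  case: (ltnP i.+1 (size (y :: w))) => le_L; split=> //.
  by rewrite (_ : i.+1 - _ = 0) //; lia.
move=> i j i' j'; move: (size (y :: w)) => L /and4P[hi hj hi' hj']; rewrite /cross /=.
by case: (ltnP i.+1 L) => ?; case: (ltnP j.+1 L) => ?;
  case: (ltnP i'.+1 L) => ?; case: (ltnP j'.+1 L) => ?; lia.
Qed.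

Lemma forces_crossing_rot k r w :
  r <= size w -> forces_crossing k (rot r w) -> forces_crossing k w.
Proof.
elim: r => [|r IH] le_rw; first by rewrite rot0.
rewrite -add1n rotD // => /forces_crossing_rot1; apply: IH; exact: ltnW.
Qed.

Lemma forces_crossing_rev k w : forces_crossing k (rev w) -> forces_crossing k w.
Proof.
apply: (forces_crossing_reindex (g := fun i => size w - i.+1)); first by rewrite size_rev.
  by move=> i hi; rewrite nth_rev //; split=> //; lia.
by move=> i j i' j' /and4P[hi hj hi' hj']; rewrite /cross /=; lia.
Qed.

Definition rotations (T : Type) (s : seq T) : seq (seq T) :=
  [seq rot r s | r <- iota 0 (size s).+1].

Definition dihedral_orbit (T : Type) (s : seq T) : seq (seq T) :=
  rotations s ++ rotations (rev s).

Section Rotations.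
Variable T : eqType.
Implicit Types s x y : seq T.

Lemma mem_rotations x s : reflect (exists2 r, r <= size s & x = rot r s) (x \in rotations s).
Proof.
apply: (iffP mapP) => [[r] | [r hr ->]]; last by exists r; rewrite // mem_iota.
by rewrite mem_iota => /andP[_ hr] ->; exists r.
Qed.

Lemma rotations_refl s : s \in rotations s.
Proof. by apply/mem_rotations; exists 0; rewrite ?rot0. Qed.

Lemma perm_rotations x s : x \in rotations s -> perm_eq x s.
Proof. by case/mem_rotations => r _ ->; rewrite perm_rot. Qed.

Lemma rotations_trans x y s : x \in rotations s -> y \in rotations x -> y \in rotations s.
Proof.
case/mem_rotations => r hr -> /mem_rotations[t]; rewrite size_rot => ht ->.
apply/mem_rotations; rewrite rot_add_mod //.
by exists (if t + r <= size s then t + r else t + r - size s) => //; case: ifP; lia.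
Qed.

Lemma rev_rotations x s : x \in rotations s -> rev x \in rotations (rev s).
Proof.
case/mem_rotations => r hr ->; rewrite rev_rot; apply/mem_rotations.
by exists (size (rev s) - r); rewrite ?leq_subr.
Qed.

Lemma perm_dihedral_orbit x s : x \in dihedral_orbit s -> perm_eq x s.
Proof.
rewrite mem_cat => /orP[/perm_rotations // | /perm_rotations/perm_trans]; apply.
by rewrite perm_rev.
Qed.

Lemma dihedral_orbit_trans x y s :
  x \in dihedral_orbit s -> y \in dihedral_orbit x -> y \in dihedral_orbit s.
Proof.
rewrite !mem_cat => /orP[] xs /orP[] yx.
- by rewrite (rotations_trans xs yx).
- by rewrite (rotations_trans (rev_rotations xs) yx) orbT.
- by rewrite (rotations_trans xs yx) orbT.
- by rewrite -[s]revK (rotations_trans (rev_rotations xs) yx).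
Qed.
End Rotations.

Lemma forces_crossing_dihedral_orbit k x w :
  x \in dihedral_orbit w -> forces_crossing k x -> forces_crossing k w.
Proof.
rewrite mem_cat => /orP[] /mem_rotations[r hr ->] /(forces_crossing_rot hr) //.
exact: forces_crossing_rev.
Qed.

Fixpoint lexle (u v : seq bool) : bool :=
  match u, v with
  | [::], _ => true
  | _ :: _, [::] => false
  | x :: u', y :: v' => if x == y then lexle u' v' else ~~ x
  end.

Lemma lexle_refl : reflexive lexle.
Proof. by elim=> //= x u IH; rewrite eqxx. Qed.

Lemma lexle_total : total lexle.
Proof. by elim=> [|x u IH] [|y v] //=; case: x; case: y => //=; exact: IH. Qed.

Lemma lexle_trans : transitive lexle.
Proof. by elim=> [|y v IH] [|x u] [|z w] //=; case: x; case: y; case: z => //=; exact: IH. Qed.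

Definition canonical (w : seq bool) : bool := all (lexle w) (dihedral_orbit w).

Lemma exists_canonical w : exists2 x, x \in dihedral_orbit w & canonical x.
Proof.
have := sort_sorted lexle_total (dihedral_orbit w).
have := mem_sort lexle (dihedral_orbit w).
case: (sort _ _) => [|x s] mem_s sorted_xs.
  by have := mem_s w; rewrite mem_cat rotations_refl.
have x_orb : x \in dihedral_orbit w by rewrite -mem_s mem_head.
exists x => //; apply/allP => y /(dihedral_orbit_trans x_orb).
rewrite -mem_s inE => /predU1P[-> | ys]; first exact: lexle_refl.
exact: (allP (order_path_min lexle_trans sorted_xs)).
Qed.

Fixpoint words (L a : nat) : seq (seq bool) :=
  if L is L'.+1 then
    map (cons false) (words L' a) ++ (if a is a'.+1 then map (cons true) (words L' a') else [::])
  else if a is 0 then [:: [::]] else [::].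

Lemma words_complete w : w \in words (size w) (count id w).
Proof.
elim: w => [|[] w IH] //=; rewrite mem_cat; apply/orP; [right | left];
  by rewrite mem_map // => ? ? [].
Qed.

Definition proper_coloring (adj : seq (seq bool)) (f : nat -> nat) : Prop :=
  forall v u, nth false (nth [::] adj v) u -> f u != f v.

(* DSATUR: an uncoloured vertex of maximal saturation, ties broken by degree.
   Only the efficiency of the search depends on this choice. *)
Fixpoint pick_vertex (i : nat) (col : seq (option nat)) (sat : seq (seq bool))
    (deg : seq nat) (best : option nat) (best_sat best_deg : nat) : option nat :=
  match col, sat, deg with
  | None :: col', s :: sat', d :: deg' =>
      let n_s := count id s in
      let better :=
        if best is Some _ then (if best_sat == n_s then best_deg < d else best_sat < n_s)
        else true in
      if better then pick_vertex i.+1 col' sat' deg' (Some i) n_s d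
      else pick_vertex i.+1 col' sat' deg' best best_sat best_deg
  | Some _ :: col', _ :: sat', _ :: deg' => pick_vertex i.+1 col' sat' deg' best best_sat best_deg
  | _, _, _ => best
  end.

Fixpoint nbr_colors (row : seq bool) (col : seq (option nat)) : seq nat :=
  match row, col with
  | true :: row', Some c :: col' => c :: nbr_colors row' col'
  | _ :: row', _ :: col' => nbr_colors row' col'
  | _, _ => [::]
  end.

Lemma nbr_colorsP row col c : c \in nbr_colors row col ->
  exists2 u, nth false row u & nth None col u = Some c.
Proof.
elim: row col => [|b row IH] [|o col] //=; first by case: b.
case: b; case: o => [c'|] //=; try by case/IH=> u; exists u.+1.
by rewrite inE => /predU1P[-> | /IH[u]]; [exists 0 | exists u.+1].
Qed.

Fixpoint saturate (row : seq bool) (sat : seq (seq bool)) (c : nat) : seq (seq bool) :=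
  match row, sat with
  | b :: row', s :: sat' => (if b then set_nth false s c true else s) :: saturate row' sat' c
  | _, _ => sat
  end.

(* Backtracking search for a proper [k]-colouring extending [col], in which
   [sat v] records the colours of the neighbours of [v] and a new colour is only
   tried as the next unused one; [false] means every extension was refuted.
   [find] rather than [has]: [||] is strict under [vm_compute], and only [find]
   stops at the first successful colour. *)
Fixpoint colorable (fuel : nat) (adj : seq (seq bool)) (deg : seq nat) (k : nat)
    (col : seq (option nat)) (used : nat) (sat : seq (seq bool)) : bool :=
  if fuel is fuel'.+1 then
    if pick_vertex 0 col sat deg None 0 0 is Some v then
      if nth None col v is Some _ then true else
      let row := nth [::] adj v in
      let extend c :=
        if c \in nbr_colors row col then false else
        colorable fuel' adj deg k (set_nth None col v (Some c)) (maxn used c.+1)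
          (saturate row sat c) in
      let cs := iota 0 (minn used.+1 k) in
      find extend cs < size cs
    else true
  else true.

Lemma colorable_complete k adj deg fuel col used sat (f : nat -> nat) :
  proper_coloring adj f -> (forall v, f v < k) ->
  (forall v c, nth None col v = Some c -> f v = c /\ c < used) ->
  colorable fuel adj deg k col used sat.
Proof.
elim: fuel f col used sat => [|fuel IH] f col used sat f_proper f_lt_k f_col //=.
case: pick_vertex => [v|] //; case col_v: (nth None col v) => [//|].
rewrite -has_find; set row := nth [::] adj v.
(* Colours are interchangeable, so some proper colouring gives [v] a colour [<= used]. *)
have [g [g_proper g_lt_k g_col le_gv]] : exists g, [/\ proper_coloring adj g,
    forall x, g x < k, forall x c, nth None col x = Some c -> g x = c /\ c < used
    & g v <= used].
  have [lt_fv | le_fv] := ltnP (f v) used; first by exists f; split=> //; exact: ltnW.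
  pose sw x := if x == f v then used else if x == used then f v else x.
  have sw_inj : injective sw.
    by move=> x y; rewrite /sw; case: (x =P f v); case: (x =P used);
      case: (y =P f v); case: (y =P used); lia.
  exists (sw \o f); split=> [x u /f_proper | x | x c /f_col[<- lt_c] | ] /=.
  - by rewrite (inj_eq sw_inj).
  - rewrite /sw; have := f_lt_k x; have := f_lt_k v.
    by case: (f x =P f v); case: (f x =P used); lia.
  - by rewrite /sw; case: (f x =P f v); case: (f x =P used); lia.
  - by rewrite /sw eqxx.
apply/hasP; exists (g v).
  by rewrite mem_iota leq_min ltnS le_gv g_lt_k.
case: ifP => [/nbr_colorsP[u vu /g_col[gu _]] | _].
  by have := g_proper v u vu; rewrite gu eqxx.
apply: (IH g) => // x c; rewrite nth_set_nth /=.
case: eqP => [-> [<-] | _ /g_col]; lia.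
Qed.

Lemma ltbE m n : Nat.ltb m n = (m < n).
Proof. by elim: m n => [|m IH] [|n] //; rewrite ltnS -IH. Qed.

(* [cross] in a form that [vm_compute] evaluates quickly: endpoints ordered once
   and for all, [Nat.ltb], and lazy conditionals instead of [&&] and [||]. *)
Definition ordered (c : nat * nat) : nat * nat := if Nat.ltb c.1 c.2 then c else (c.2, c.1).

Definition cross_ordered (c c' : nat * nat) : bool :=
  if Nat.ltb c.1 c'.1 then (if Nat.ltb c'.1 c.2 then Nat.ltb c.2 c'.2 else false)
  else if Nat.ltb c'.1 c.1 then (if Nat.ltb c.1 c'.2 then Nat.ltb c'.2 c.2 else false)
  else false.

Lemma cross_orderedE c c' : cross_ordered (ordered c) (ordered c') = cross c c'.
Proof.
case: c c' => [a b] [a' b']; rewrite /cross_ordered /ordered /cross /= !ltbE.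
by case: (ltnP a b); case: (ltnP a' b') => /= ? ?; rewrite ?ltbE;
  (repeat case: ifP => ?); lia.
Qed.

Definition crossing_graph (chs : seq (nat * nat)) : seq (seq bool) :=
  let och := map ordered chs in [seq [seq cross_ordered c c' | c' <- och] | c <- och].

Lemma nth_crossing_graph chs v u : nth false (nth [::] (crossing_graph chs) v) u =
  [&& v < size chs, u < size chs & cross (nth (0, 0) chs v) (nth (0, 0) chs u)].
Proof.
rewrite /crossing_graph; have [lt_v | le_v] := ltnP v (size chs); last first.
  by rewrite (nth_default [::]) ?size_map // nth_nil.
rewrite (nth_map (0, 0)) ?size_map //; have [lt_u | le_u] := ltnP u (size chs).
  by rewrite !(nth_map (0, 0)) ?size_map // cross_orderedE.
by rewrite (nth_default false) ?size_map.
Qed.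

Definition uncolorable (k : nat) (w : seq bool) : bool :=
  let chs := chords w in let adj := crossing_graph chs in
  ~~ colorable (size chs).+1 adj [seq count id r | r <- adj] k
       (nseq (size chs) None) 0 (nseq (size chs) (nseq k false)).

Lemma uncolorable_forces_crossing k w : uncolorable k w -> forces_crossing k w.
Proof.
move=> /negP unc p p_lt_k; apply/negPn/negP => /hasPn no_cross; apply: unc.
set chs := chords w.
apply: (@colorable_complete k _ _ _ _ _ _ (fun v => p (nth (0, 0) chs v)))
  => // [v u | v c].
  rewrite nth_crossing_graph => /and3P[lt_v lt_u x_vu].
  have := hasPn (no_cross _ (mem_nth (0, 0) lt_v)) _ (mem_nth (0, 0) lt_u).
  by rewrite eq_sym; case/nandP => // /negP[].
by rewrite nth_nseq; case: ifP.
Qed.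

Definition certificate (k m nb : nat) : bool :=
  all (uncolorable k) [seq w <- words (m + nb) m | canonical w].

Lemma certificateP k m nb w : certificate k m nb ->
  size w = m + nb -> count id w = m -> forces_crossing k w.
Proof.
move=> /allP cert size_w count_w; have [x x_orb can_x] := exists_canonical w.
have perm_xw := perm_dihedral_orbit x_orb.
apply: forces_crossing_dihedral_orbit x_orb _; apply/uncolorable_forces_crossing/cert.
rewrite mem_filter can_x -size_w -count_w -(perm_size perm_xw) -(seq.permP perm_xw).
exact: words_complete.
Qed.

Lemma exists_subset_card (T : finType) (A : {set T}) r :
  r <= #|A| -> exists2 S : {set T}, S \subset A & #|S| = r.
Proof.
move=> le_rA; exists [set x in take r (enum A)].
  by apply/subsetP => x; rewrite inE => /mem_take; rewrite mem_enum.
by rewrite cardsE (card_uniqP (take_uniq _ (enum_uniq _))) size_take -cardE; case: ltnP; lia.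
Qed.

Section Drawing.
Variables (k m n : nat) (d : drawing k m n).

Definition is_inl (v : bvert m n) : bool := if v is inl _ then true else false.

Definition pos_le (u v : bvert m n) : bool := pos d u <= pos d v.

Definition spine (S : {set 'I_n}) : seq (bvert m n) :=
  sort pos_le (map inl (enum 'I_m) ++ map inr (enum S)).

Definition spine_word (S : {set 'I_n}) : seq bool := map is_inl (spine S).

Lemma pos_inj : injective (pos d).
Proof. by move=> u v /val_inj/enum_rank_inj/perm_inj. Qed.

Lemma mem_spine_inr S b : (inr b \in spine S) = (b \in S).
Proof.
rewrite mem_sort mem_cat mem_map ?mem_enum; last by move=> ? ? [].
by case: mapP => // -[].
Qed.

Lemma uniq_spine S : uniq (spine S).
Proof.
rewrite sort_uniq cat_uniq !map_inj_uniq ?enum_uniq //; try by move=> ? ? [].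
rewrite -enumT enum_uniq andbT; apply/hasPn => _ /mapP[b _ ->].
by apply/mapP => -[].
Qed.

Lemma size_spine_word S : size (spine_word S) = m + #|S|.
Proof. by rewrite size_map size_sort size_cat !size_map -enumT size_enum_ord cardE. Qed.

Lemma count_spine_word S : count id (spine_word S) = m.
Proof.
rewrite count_map (seq.permP (permEl (perm_sort _ _))) count_cat !count_map.
rewrite [X in X + _](eq_count (a2 := predT)) // [X in _ + X](eq_count (a2 := pred0)) //.
by rewrite count_predT -enumT size_enum_ord count_pred0 addn0.
Qed.

Lemma pos_spine_lt S x0 i j : i < size (spine S) -> j < size (spine S) ->
  (pos d (nth x0 (spine S) i) < pos d (nth x0 (spine S) j)) = (i < j).
Proof.
have sorted_S : sorted pos_le (spine S) by apply: sort_sorted => u v; exact: leq_total.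
have pos_le_trans : transitive pos_le by move=> y x z; exact: leq_trans.
have mono i' j' : i' < size (spine S) -> j' < size (spine S) -> i' < j' ->
    pos d (nth x0 (spine S) i') < pos d (nth x0 (spine S) j').
  move=> hi hj lt_ij; have := sorted_ltn_nth pos_le_trans x0 sorted_S _ _ hi hj lt_ij.
  rewrite /pos_le ltn_neqAle => ->; rewrite andbT.
  apply: contraTneq lt_ij => /pos_inj/eqP.
  by rewrite nth_uniq ?uniq_spine // => /eqP->; rewrite ltnn.
move=> hi hj; case: (ltngtP i j) => [lt_ij | lt_ji | ->]; last by rewrite ltnn.
  exact: mono.
by apply/negbTE; rewrite -leqNgt ltnW ?mono.
Qed.

Definition conflict (b b' : 'I_n) : bool :=
  [exists e1 : bedge m n, exists e2 : bedge m n,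
     crossb d e1 e2 && ((e1.2 == b) && (e2.2 == b') || (e1.2 == b') && (e2.2 == b))].

Lemma conflict_cross a b a' b' : d.2 (a, b) = d.2 (a', b') ->
  cross (pos d (inl a), pos d (inr b)) (pos d (inl a'), pos d (inr b')) -> conflict b b'.
Proof.
move=> eq_page /orP[] x_ab; apply/existsP.
  exists (a, b); apply/existsP; exists (a', b').
  by rewrite /crossb eq_page eqxx x_ab !eqxx.
exists (a', b'); apply/existsP; exists (a, b).
by rewrite /crossb eq_page eqxx x_ab !eqxx orbT.
Qed.

Lemma forces_crossing_conflict S : 0 < k -> 0 < m -> forces_crossing k (spine_word S) ->
  exists b b', [/\ b \in S, b' \in S & conflict b b'].
Proof.
move=> k_gt0 m_gt0 forced; set s := spine S; pose x0 : bvert m n := inl (Ordinal m_gt0).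
pose page (c : nat * nat) :=
  if (nth x0 s c.1, nth x0 s c.2) is (inl a, inr b) then val (d.2 (a, b)) else 0.
have page_lt_k c : page c < k.
  by rewrite /page; case: (nth x0 s c.1) => a; case: (nth x0 s c.2) => b; rewrite ?ltn_ord.
have /hasP[[i j] ij_ch /hasP[[i' j'] ij'_ch /andP[x_ij eq_page]]] := forced page page_lt_k.
have in_S t b : t < size s -> nth x0 s t = inr b -> b \in S.
  by move=> ht hb; rewrite -(mem_spine_inr S) -hb mem_nth.
move: ij_ch ij'_ch; rewrite !mem_chords size_map.
move=> /and4P[hi hj wi wj] /and4P[hi' hj' wi' wj'].
move: eq_page wi wj wi' wj'; rewrite /page /= !(nth_map x0) //.
case Ei: (nth x0 s i) => [a|//]; case Ej: (nth x0 s j) => [//|b].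
case Ei': (nth x0 s i') => [a'|//]; case Ej': (nth x0 s j') => [//|b'].
move=> /eqP/val_inj eq_pg _ _ _ _.
exists b, b'; split; [exact: in_S Ej | exact: in_S Ej' |].
apply: conflict_cross eq_pg _; rewrite -Ei -Ej -Ei' -Ej'.
rewrite (cross_homo (g := fun t => pos d (nth x0 s t)) (L := size s)) ?hi ?hj ?hi' ?hj' //.
by move=> x y hx hy; exact: pos_spine_lt.
Qed.

Lemma conflict_sym : symmetric conflict.
Proof.
by move=> b b'; apply/existsP/existsP => -[e1 /existsP[e2 h]]; exists e1;
  apply/existsP; exists e2; rewrite orbC.
Qed.

Lemma conflict_irr : irreflexive conflict.
Proof.
move=> b; apply/negbTE/existsP => -[e1 /existsP[e2]]; rewrite orbb.
by case/andP=> /andP[_ x_e] /andP[/eqP e1b /eqP e2b]; move: x_e; rewrite /lo /hi e1b e2b; lia.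
Qed.

Lemma sum_conflict_le :
  \sum_(b in [set: 'I_n]) #|nbhd conflict [set: 'I_n] b| <= 2 * crossings d.
Proof.
set X := [set ef : bedge m n * bedge m n | crossb d ef.1 ef.2].
pose ends (ef : bedge m n * bedge m n) := (ef.1.2, ef.2.2).
pose ends' (ef : bedge m n * bedge m n) := (ef.2.2, ef.1.2).
rewrite sum_nbhd_card /crossings -/X mul2n -addnn.
apply: (@leq_trans #|ends @: X :|: ends' @: X|); last first.
  by apply: leq_trans (leq_card_setU _ _) _; rewrite leq_add ?leq_imset_card.
apply: subset_leq_card; apply/subsetP => -[b b'].
rewrite !inE /= => /existsP[e1 /existsP[e2]].
case/andP=> x_e /orP[] /andP[/eqP e1b /eqP e2b]; apply/orP; [left | right];
  by apply/imsetP; exists (e1, e2); rewrite ?inE //= /ends /ends' e1b e2b.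
Qed.

End Drawing.

Lemma nu_ge_turan_sum k m l n : 0 < k -> 0 < m -> certificate k m l.+1 ->
  turan_sum n l <= nu k m n.
Proof.
move=> k_gt0 m_gt0 cert; apply: (big_ind (fun x => turan_sum n l <= x)).
- apply: leq_trans (turan_sum_le_sq n l) _.
  by rewrite expnS expn1 leq_mul // leq_pmull.
- by move=> x y hx hy; rewrite leq_min hx hy.
move=> d _; have indep : indep_le (conflict d) [set: 'I_n] l.
  move=> I _ indI; rewrite leqNgt; apply/negP => /exists_subset_card[S sSI card_S].
  have forced : forces_crossing k (spine_word d S).
    by apply: certificateP cert _ (count_spine_word d S); rewrite size_spine_word card_S.
  have [b [b' [bS b'S]]] := forces_crossing_conflict k_gt0 m_gt0 forced.
  by apply/negP; rewrite indI ?(subsetP sSI).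
have := turan (conflict_sym d) (conflict_irr d) indep.
rewrite cardsT card_ord => le_sum; rewrite -(leq_pmul2l (isT : 0 < 2)).
exact: leq_trans le_sum (sum_conflict_le d).
Qed.

Lemma certificates : all (fun k => certificate k k.+1 (k.+1 ^ 2 %/ 4).+1) (iota 2 5).
Proof. vm_cast_no_check (erefl true). Qed.

Unset Implicit Arguments.

Theorem lemma16 (k n : nat) :
  2 <= k <= 6 -> 0 < n ->
  let l := (k.+1 ^ 2) %/ 4 in
  let q := n %% l in
  q * 'C((n - q) %/ l + 1, 2) + (l - q) * 'C((n - q) %/ l, 2) <= nu k k.+1 n.
Proof.
move=> /andP[k_ge2 k_le6] _; cbv zeta; set l := _ %/ 4.
have l_gt0 : 0 < l by rewrite divn_gt0 // expnS expn1; nia.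
have cert : certificate k k.+1 l.+1 by apply: (allP certificates); rewrite mem_iota; lia.
have -> : (n - n %% l) %/ l = n %/ l by rewrite {1}(divn_eq n l) addnK mulnK.
by rewrite -turan_sum_closed //; apply: nu_ge_turan_sum cert; lia.
Qed.
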